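(* Let $A\in\mathbb{R}^{m\times n}$, $b\in\mathbb{R}^m$, $1\le k\le n$, and let $p$ be an LPM polynomial of degree $k$ on $n\times n$ symmetric matrices with nonnegative coefficients such that $p(A^{\intercal}A)\neq 0$. Consider the sparse QCQP with $A_1=A^{\intercal}A$ and $A_0=A^{\intercal}bb^{\intercal}A$ (i.e. maximize $x^{\intercal}A^{\intercal}bb^{\intercal}Ax$ subject to $x^{\intercal}A^{\intercal}Ax=1$, $|\mathrm{supp}(x)|\le k$). Then the largest real root $\eta_p$ of the univariate polynomial $t\mapsto p(A^{\intercal}A\,t-A^{\intercal}bb^{\intercal}A)$ equals $$\eta_p=\frac{p(A^{\intercal}(I+bb^{\intercal})A)}{p(A^{\intercal}A)}-1.$$
   Context: An LPM polynomial of degree $k$ is a polynomial in a symmetric $n\times n$ matrix $X$, not identically zero, of the form $p(X)=\sum_{S\subseteq[n],|S|=k}a_S\det(X|_S)$, where $X|_S$ is the principal submatrix indexed by $S$. $\mathrm{supp}(x)=\{i:x_i\ne0\}$. *)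

From HB Require Import structures.
From mathcomp Require Import all_boot all_order all_algebra.
From mathcomp Require Import all_classical all_reals.
Set Implicit Arguments. Unset Strict Implicit. Unset Printing Implicit Defensive.
Import Order.TTheory GRing.Theory Num.Theory.
Local Open Scope ring_scope.

Definition psubmx (R : Type) (n : nat) (X : 'M[R]_n) (S : {set 'I_n})
  : 'M[R]_#|S| :=
  \matrix_(i < #|S|, j < #|S|) X (enum_val i) (enum_val j).

Definition lpm (R : comRingType) (n k : nat) (a : {set 'I_n} -> R)
  (X : 'M[R]_n) : R :=
  \sum_(S : {set 'I_n} | #|S| == k) a S * \det (psubmx X S).

(* the univariate polynomial t |-> p(A1 t - A0), as an element of {poly R} *)
Definition lpm_pencil (R : comRingType) (n k : nat) (a : {set 'I_n} -> R)
  (A1 A0 : 'M[R]_n) : {poly R} :=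
  lpm k (fun S => (a S)%:P)
      (\matrix_(i, j) ((A1 i j)%:P * 'X - (A0 i j)%:P)).

Definition is_largest_root (R : realType) (q : {poly R}) (eta : R) : Prop :=
  root q eta /\ (forall t : R, root q t -> t <= eta).

(* The determinant is affine along rank-one directions: det (X + s u v^T) is
   the determinant of the bordered matrix [[1, s v^T], [-u, X]] (a Schur
   complement), in which s occurs only in the first row. Hence, with c = A^T b,
   the minor of t A^T A - c c^T on a k-set S is t^k d_S - t^(k-1) e_S, where
   d_S = det (A^T A)|_S and e_S = det (A^T A + c c^T)|_S - d_S, and the pencil is
   t^(k-1) (P t - Q) with P = p(A^T A) and Q = p(A^T (I + b b^T) A) - P.
   Its largest root is Q / P because P > 0 and Q >= 0: the coefficients a_S are
   nonnegative, Gram determinants are nonnegative, and det (A^T A + s c c^T)|_S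
   is a Gram determinant for every s >= 0, so the affine map s |-> d_S + s e_S
   is nonnegative on [0, +oo), forcing e_S >= 0. *)

From HB Require Import structures.
From mathcomp Require Import all_boot all_order all_algebra.
From mathcomp Require Import all_classical all_reals.
From mathcomp Require Import polyrcf ring lra.
Set Implicit Arguments.
Unset Strict Implicit.
Unset Printing Implicit Defensive.

Import Order.TTheory GRing.Theory Num.Theory.
Local Open Scope ring_scope.

Section RankOnePerturbation.
Variables (R : comPzRingType) (k : nat).
Implicit Types (X : 'M[R]_k) (u v : 'cV[R]_k).

Lemma det_add_rank1_block X u v s :
  \det (X + s *: (u *m v^T)) = \det (block_mx 1 (s *: v^T) (- u) X : 'M_(1 + k)).
Proof.
have factor : block_mx 1 0 u 1 *m block_mx 1 (s *: v^T) (- u) X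
         = block_mx 1 (s *: v^T) 0 (X + s *: (u *m v^T)) :> 'M[R]_(1 + k).
  by rewrite mulmx_block !mul1mx !mul0mx !addr0 mulmx1 addrN -scalemxAr addrC.
have := congr1 determinant factor.
by rewrite det_mulmx det_lblock det_ublock !det1 !mul1r => <-.
Qed.

Lemma det_add_scaled_rank1 X u v s :
  \det (X + s *: (u *m v^T)) = \det X + s * (\det (X + u *m v^T) - \det X).
Proof.
pose B := block_mx 1 0 (- u) X : 'M[R]_(1 + k).
pose C := block_mx 0 v^T (- u) X : 'M[R]_(1 + k).
suff affine : forall t, \det (X + t *: (u *m v^T)) = \det X + t * \det C.
  have := affine 1; rewrite scale1r mul1r => ->.
  by rewrite affine addrAC subrr add0r.
move=> t.
have detB : \det B = \det X by rewrite det_lblock det1 mul1r.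
rewrite det_add_rank1_block -detB -[\det B]mul1r.
apply: (determinant_multilinear (i0 := lshift k 0)); rewrite /B /C !block_mxEv.
- rewrite !rowKu !row_id scale1r scale_row_mx add_row_mx.
  by rewrite scaler0 addr0 add0r.
- by rewrite !row'Ku !(flatmx0 (row' 0 (row_mx _ _))).
- by rewrite !row'Ku !(flatmx0 (row' 0 (row_mx _ _))).
Qed.

End RankOnePerturbation.

Lemma horner_char_polyN (R : comNzRingType) k (G : 'M[R]_k) (x : R) :
  (char_poly (- G)).[x] = \det (x%:M + G).
Proof.
rewrite -[_.[x]]/(horner_eval x _) -det_map_mx; congr (\det _).
apply/matrixP => i j; rewrite !mxE /= /horner_eval.
by case: (i == j); rewrite !hornerE ?opprK.
Qed.

Section GramDeterminants.
Variable R : realDomainType.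

Lemma mul_tr_self_ge0 p (w : 'rV[R]_p) : 0 <= (w *m w^T) 0 0.
Proof. by rewrite mxE; apply: sumr_ge0 => i _; rewrite mxE -expr2 sqr_ge0. Qed.

Lemma mul_tr_self_eq0 p (w : 'rV[R]_p) : ((w *m w^T) 0 0 == 0) = (w == 0).
Proof.
apply/idP/eqP => [|->]; last by rewrite mul0mx mxE.
rewrite mxE psumr_eq0 => [/allP w0|i _]; last by rewrite mxE -expr2 sqr_ge0.
apply/rowP => i; have /implyP := w0 i (mem_index_enum i).
by rewrite mxE -expr2 sqrf_eq0 !mxE => /(_ isT)/eqP.
Qed.

Lemma det_add_scalar_gram_neq0 m p (B : 'M[R]_(m, p)) x : 0 < x ->
  \det (x%:M + B^T *m B) != 0.
Proof.
move=> x_gt0; apply/negP => /det0P [v v_neq0 vE].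
have : (v *m (x%:M + B^T *m B) *m v^T) 0 0 = 0 by rewrite vE mul0mx mxE.
rewrite mulmxDr mulmxDl mul_mx_scalar -scalemxAl mxE [in X in X + _]mxE.
have -> : v *m (B^T *m B) *m v^T = (v *m B^T) *m (v *m B^T)^T.
  by rewrite trmx_mul trmxK !mulmxA.
move/eqP; rewrite paddr_eq0 ?mulr_ge0 ?mul_tr_self_ge0 ?ltW //.
by rewrite mulf_eq0 gt_eqF //= mul_tr_self_eq0 (negbTE v_neq0).
Qed.

End GramDeterminants.

Lemma det_gram_ge0 (R : rcfType) m p (B : 'M[R]_(m, p)) : 0 <= \det (B^T *m B).
Proof.
rewrite leNgt; apply/negP => det_lt0.
pose f := char_poly (- (B^T *m B)).
have lc_gt0 : 0 < lead_coef f by rewrite (eqP (char_poly_monic _)) ltr01.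
have [z f_gt_lc] := poly_pinfty_gt_lc lc_gt0.
pose x := Num.max z 1.
have fx_gt0 : 0 < f.[x].
  by apply: lt_le_trans lc_gt0 (f_gt_lc _ _); rewrite le_max lexx.
have f0_lt0 : f.[0] < 0 by rewrite horner_char_polyN raddf0 add0r.
have x_ge0 : 0 <= x by rewrite le_max ler01 orbT.
have f_sign_change : f.[0] <= 0 <= f.[x] by rewrite !ltW.
(* f = det (x + G) is monic with f 0 = det G < 0, so it has a positive root. *)
have [r /andP [r_ge0 _] /rootP fr0] := poly_ivt x_ge0 f_sign_change.
have r_gt0 : 0 < r.
  rewrite lt_def r_ge0 andbT; apply: contraTneq f0_lt0 => r0.
  by rewrite -[X in f.[X]]r0 fr0 ltxx.
by move: (det_add_scalar_gram_neq0 B r_gt0); rewrite -horner_char_polyN fr0 eqxx.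
Qed.

Lemma psubmxE (R : comNzRingType) n (X : 'M[R]_n) (S : {set 'I_n}) :
  psubmx X S = mxsub enum_val enum_val X.
Proof. by []. Qed.

Lemma rmorph_lpm (R R' : comNzRingType) (f : {rmorphism R -> R'}) n k
    (a : {set 'I_n} -> R) (X : 'M[R]_n) :
  f (lpm k a X) = lpm k (f \o a) (map_mx f X).
Proof.
rewrite rmorph_sum; apply: eq_bigr => S _.
by rewrite rmorphM -det_map_mx !psubmxE map_mxsub.
Qed.

Lemma horner_lpm_pencil (R : comNzRingType) n k (a : {set 'I_n} -> R)
    (A1 A0 : 'M[R]_n) (t : R) :
  (lpm_pencil k a A1 A0).[t] = lpm k a (t *: A1 - A0).
Proof.
rewrite /lpm_pencil -[_.[t]]/(horner_eval t _) rmorph_lpm; congr lpm.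
  by apply/funext => S; apply: hornerC.
rewrite -matrixP => i j; rewrite !mxE.
by rewrite [LHS]horner_evalE !hornerE mulrC.
Qed.

Lemma eq_poly_on_nonzero (R : numDomainType) (p q : {poly R}) :
  (forall t, t != 0 -> p.[t] = q.[t]) -> p = q.
Proof.
move=> pq; apply/eqP; rewrite -subr_eq0; apply/eqP.
pose ts := [seq i.+1%:R : R | i <- iota 0 (size (p - q))].
apply: (@roots_geq_poly_eq0 _ _ ts); last by rewrite size_map size_iota.
  apply/allP => _ /mapP [i _ ->]; apply/rootP.
  by rewrite hornerD hornerN pq ?subrr // pnatr_eq0.
by rewrite map_inj_uniq ?iota_uniq // => i j /eqP; rewrite eqr_nat => /eqP [].
Qed.

Lemma largest_root_Xn_mulZXsubC (R : realType) (P Q : R) j : 0 < P -> 0 <= Q ->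
  is_largest_root ('X^j * (P *: 'X - Q%:P)) (Q / P).
Proof.
move=> P_gt0 Q_ge0; have P_neq0 : P != 0 by rewrite gt_eqF.
split=> [|t]; first by rewrite rootM root_ZXsubC // eqxx orbT.
rewrite rootM root_ZXsubC // => /orP [|/eqP -> //].
by rewrite rootE hornerXn expf_eq0 => /andP [_ /eqP ->]; rewrite divr_ge0 // ltW.
Qed.

Lemma det_scale_sub_rank1 (R : fieldType) k (X : 'M[R]_k) (u v : 'cV[R]_k) t :
  t != 0 ->
  \det (t *: X - u *m v^T) =
  t ^+ k * (\det X - t^-1 * (\det (X + u *m v^T) - \det X)).
Proof.
move=> t_neq0; have -> : t *: X - u *m v^T = t *: (X + (- t^-1) *: (u *m v^T)).
  by rewrite scalerDr scalerA mulrN divff // scaleN1r.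
by rewrite detZ det_add_scaled_rank1 mulNr.
Qed.

Lemma lpm_pencil_rank1 (R : numFieldType) n k (a : {set 'I_n} -> R)
    (X : 'M[R]_n) (u v : 'cV[R]_n) :
  lpm_pencil k.+1 a X (u *m v^T) =
  'X^k * (lpm k.+1 a X *: 'X - (lpm k.+1 a (X + u *m v^T) - lpm k.+1 a X)%:P).
Proof.
apply: eq_poly_on_nonzero => t t_neq0.
rewrite horner_lpm_pencil !hornerE /lpm -sumrB mulr_suml -sumrB mulr_sumr.
apply: eq_bigr => S /eqP cardS.
rewrite !psubmxE linearB linearD linearZ /= mxsub_mul -trmx_mxsub.
rewrite det_scale_sub_rank1 // (_ : t ^+ #|S| = t ^+ k.+1) ?cardS //.
by rewrite exprSr -mulrA mulrBr mulVKf //; ring.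
Qed.

Lemma ge0_affine_slope (R : realFieldType) (d e : R) :
  (forall s, 0 <= s -> 0 <= d + s * e) -> 0 <= e.
Proof.
move=> affine_ge0; rewrite leNgt; apply/negP => e_lt0.
have s_ge0 : 0 <= (`|d| + 1) / - e.
  by apply: divr_ge0; [apply: addr_ge0 (normr_ge0 d) ler01 | rewrite oppr_ge0 ltW].
have := affine_ge0 _ s_ge0.
rewrite invrN mulrN mulNr -mulrA mulVf ?lt_eqF // mulr1.
have := ler_norm d; lra.
Qed.

Section GramRankOne.
Variables (R : rcfType) (m p : nat) (B : 'M[R]_(m, p)) (u : 'cV[R]_p).

Lemma det_gram_add_scaled_rank1_ge0 s : 0 <= s ->
  0 <= \det (B^T *m B + s *: (u *m u^T)).
Proof.
move=> s_ge0; pose w := Num.sqrt s *: u^T.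
have -> : B^T *m B + s *: (u *m u^T) = (col_mx B w)^T *m col_mx B w.
  rewrite tr_col_mx mul_row_col /w [(_ *: u^T)^T]linearZ /= trmxK.
  by rewrite -scalemxAl -scalemxAr scalerA -expr2 sqr_sqrtr.
exact: det_gram_ge0.
Qed.

Lemma det_gram_le_add_rank1 : \det (B^T *m B) <= \det (B^T *m B + u *m u^T).
Proof.
rewrite -subr_ge0; apply: (ge0_affine_slope (d := \det (B^T *m B))) => s s_ge0.
by rewrite -det_add_scaled_rank1 det_gram_add_scaled_rank1_ge0.
Qed.

End GramRankOne.

Section LpmGram.
Variables (R : rcfType) (m n k : nat) (a : {set 'I_n} -> R).
Hypothesis a_ge0 : forall S, 0 <= a S.
Variable A : 'M[R]_(m, n).

Lemma lpm_gram_ge0 : 0 <= lpm k a (A^T *m A).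
Proof.
apply: sumr_ge0 => S _; rewrite mulr_ge0 // psubmxE mxsub_mul -trmx_mxsub.
exact: det_gram_ge0.
Qed.

Lemma lpm_gram_le_add_rank1 (u : 'cV[R]_n) :
  lpm k a (A^T *m A) <= lpm k a (A^T *m A + u *m u^T).
Proof.
apply: ler_sum => S _; rewrite ler_wpM2l // !psubmxE linearD /= !mxsub_mul.
by rewrite -!trmx_mxsub det_gram_le_add_rank1.
Qed.

End LpmGram.

Theorem mainTheorem3 (R : realType) (m n k : nat)
  (A : 'M[R]_(m, n)) (b : 'cV[R]_m) (a : {set 'I_n} -> R) :
  (1 <= k <= n)%N ->
  (forall S : {set 'I_n}, 0 <= a S) ->
  (exists S : {set 'I_n}, (#|S| == k)%N && (a S != 0)) ->
  lpm k a (A^T *m A) != 0 ->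
  is_largest_root
    (lpm_pencil k a (A^T *m A) (A^T *m b *m b^T *m A))
    (lpm k a (A^T *m (1%:M + b *m b^T) *m A) / lpm k a (A^T *m A) - 1).
Proof.
case: k => [|k] // _ a_ge0 _ P_neq0.
set c := A^T *m b.
have -> : A^T *m b *m b^T *m A = c *m c^T by rewrite trmx_mul trmxK !mulmxA.
have -> : A^T *m (1%:M + b *m b^T) *m A = A^T *m A + c *m c^T.
  by rewrite mulmxDr mulmx1 mulmxDl trmx_mul trmxK !mulmxA.
set P := lpm k.+1 a (A^T *m A) in P_neq0 *.
set Q := lpm k.+1 a (A^T *m A + c *m c^T) - P.
have P_gt0 : 0 < P by rewrite lt_def P_neq0 lpm_gram_ge0.
have Q_ge0 : 0 <= Q by rewrite subr_ge0 lpm_gram_le_add_rank1.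
have -> : lpm k.+1 a (A^T *m A + c *m c^T) / P - 1 = Q / P.
  by rewrite mulrBl divff // gt_eqF.
by rewrite lpm_pencil_rank1; apply: largest_root_Xn_mulZXsubC.
Qed.
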